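(* In the natural Hopf algebra $\mathcal N_{E^\bullet}=\mathbb K[t_2,t_3,\dots]$ (with $t_1=1$), the antipode satisfies, for every $n\ge2$, $$nS(t_n)=\sum_{k=1}^{n-1}(-1)^k(n+k-1)_k\,B_{n-1,k}(t_2,t_3,\dots)=\Big[\tfrac{x^{n-1}}{(n-1)!}\Big]\Big(1+\sum_{j\ge1}t_{j+1}\tfrac{x^j}{j!}\Big)^{-n},$$ where $(m)_k=m(m-1)\cdots(m-k+1)$. Equivalently, $nS(t_n)=\big[\tfrac{x^{n-1}}{(n-1)!}\big]\big(E^{\bullet I}(x)/x\big)^{-n}$, with $E^{\bullet I}(x)=x+\sum_{n\ge2}nt_n\frac{x^n}{n!}$.
   Context: $E^\bullet$ is the species of pointed sets: $E^\bullet[U]=\{(U,v):v\in U\}$ for $U\ne\emptyset$. It is a set operad with product $\eta(\{(B,v_B)\}_{B\in\pi},(\pi,B_0))=(U,v_{B_0})$, where $B_0\in\pi$ is the distinguished block. Types are identified with the cardinality $n$, with generator $t_n$ and $t_1=1$. The coproduct of the natural Hopf algebra is given by $n\Delta(t_n)=\sum_{k=1}^nB_{n,k}(0,2t_2,3t_3,\dots)\otimes kt_k$, and $S$ is its antipode. $B_{n,k}(x_1,x_2,\dots)=\sum_{\pi\in\Pi[n],|\pi|=k}\prod_{B\in\pi}x_{|B|}$ is the partial Bell polynomial, and $B_{n-1,k}(t_2,t_3,\dots)$ means $B_{n-1,k}(y_1,y_2,\dots)$ with $y_j=t_{j+1}$. $[x^m/m!]f$ denotes $m!$ times the coefficient of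 $x^m$ in $f$. *)

From HB Require Import structures.
From mathcomp Require Import all_boot all_order all_algebra.
Set Implicit Arguments. Unset Strict Implicit. Unset Printing Implicit Defensive.
Import Order.TTheory GRing.Theory.
Local Open Scope ring_scope.

(* Partial Bell polynomial B_{n,k}(x_1,x_2,...) evaluated in a commutative
   ring: sum over set partitions pi of {0..n-1} with k blocks of
   prod_{B in pi} x_{|B|}. *)
Definition bell (R : comPzRingType) (n k : nat) (x : nat -> R) : R :=
  \sum_(P : {set {set 'I_n}} | partition P [set: 'I_n] && (#|P| == k))
     \prod_(B in P) x #|B|.

(* Formal power series over R, represented by their coefficient sequences. *)
Definition ps_mul (R : comPzRingType) (f g : nat -> R) : nat -> R :=
  fun m => \sum_(i < m.+1) f i * g (m - i)%N.

Definition ps_one (R : comPzRingType) : nat -> R := fun m => (m == 0%N)%:R.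

Fixpoint ps_pow (R : comPzRingType) (f : nat -> R) (n : nat) : nat -> R :=
  match n with
  | 0 => @ps_one R
  | n'.+1 => ps_mul f (ps_pow f n')
  end.

(* Multiplicative inverse of a power series f with constant term f 0 = 1:
   g 0 = 1, g m = - sum_{i=1}^m f i * g (m - i). (Only used on series with
   constant coefficient 1.) *)
Fixpoint ps_inv_seq (R : comPzRingType) (f : nat -> R) (m : nat) : seq R :=
  match m with
  | 0 => [:: 1]
  | m'.+1 => let s := ps_inv_seq f m' in
      rcons s (- \sum_(1 <= i < m'.+2) f i * nth 0 s (m'.+1 - i)%N)
  end.

Definition ps_inv (R : comPzRingType) (f : nat -> R) : nat -> R :=
  fun m => nth 0 (ps_inv_seq f m) m.

(* [x^m / m!] f  :=  m! * (coefficient of x^m in f) *)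
Definition egf_coef (R : comPzRingType) (m : nat) (f : nat -> R) : R :=
  (m`!)%:R * f m.

(* Put [s_j = j S(t_j)], [G = sum_j s_j x^j/j!] and [P = sum_m t_(m+1) x^m/m!].
   By Faa di Bruno's formula the antipode identity for [t_n], n >= 2, says that
   the coefficient of [x^n] in [G P(G)] vanishes, so that [G P(G) = x].
   Lagrange inversion then gives [n [x^n] G = [x^(n-1)] P^-n], which is the
   second form. Writing [P = 1 + T], expanding [(1 + T)^-n] by the negative
   binomial series and reading off [[x^j/j!] T^k/k! = B_(j,k)] gives the first;
   the third is a rewriting of the series [P]. *)

From HB Require Import structures.
From mathcomp Require Import all_boot all_order all_algebra.
From mathcomp Require Import ring zify.
Import Order.TTheory GRing.Theory.
Local Open Scope ring_scope.

Set Implicit Arguments. Unset Strict Implicit. Unset Printing Implicit Defensive.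

Lemma sum_ord_narrow (R : nmodType) M j (F : nat -> R) : (j <= M)%N ->
  (forall i, (j <= i < M)%N -> F i = 0) -> \sum_(i < M) F i = \sum_(i < j) F i.
Proof.
move=> le_jM F0; rewrite (big_ord_widen M F le_jM) (bigID (fun i : 'I_M => (i < j)%N)) /=.
rewrite addrC big1 ?add0r // => i; rewrite -leqNgt => le_ji.
by rewrite F0 // le_ji ltn_ord.
Qed.

Section TruncatedEquality.

Variable R : comNzRingType.
Implicit Types p q : {poly R}.

(* [p = q mod X^N]; formal power series are handled through their truncations. *)
Definition eq_upto N p q := forall i, (i < N)%N -> p`_i = q`_i.

Lemma eq_upto_refl N p : eq_upto N p p.
Proof. by []. Qed.

Lemma eq_upto_sym N p q : eq_upto N p q -> eq_upto N q p.
Proof. by move=> epq i lt_iN; rewrite epq. Qed.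

Lemma eq_upto_trans N p q r : eq_upto N p q -> eq_upto N q r -> eq_upto N p r.
Proof. by move=> epq eqr i lt_iN; rewrite epq // eqr. Qed.

Lemma eq_upto_le M N p q : (M <= N)%N -> eq_upto N p q -> eq_upto M p q.
Proof. by move=> le_MN epq i lt_iM; apply: epq; apply: leq_trans le_MN. Qed.

Lemma eq_upto_mul N p p' q q' :
  eq_upto N p p' -> eq_upto N q q' -> eq_upto N (p * q) (p' * q').
Proof.
move=> epp eqq i lt_iN; rewrite !coefM; apply: eq_bigr => j _.
by rewrite epp ?eqq //; apply: leq_ltn_trans lt_iN; rewrite ?leq_subr // -ltnS.
Qed.

Lemma eq_upto_mull N p q q' : eq_upto N q q' -> eq_upto N (p * q) (p * q').
Proof. exact: eq_upto_mul. Qed.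

Lemma eq_upto_exp N p q n : eq_upto N p q -> eq_upto N (p ^+ n) (q ^+ n).
Proof.
by move=> epq; elim: n => [|n IH]; rewrite ?exprS //; apply: eq_upto_mul.
Qed.

Lemma eq_upto_deriv N p q : eq_upto N.+1 p q -> eq_upto N p^`() q^`().
Proof. by move=> epq i lt_iN; rewrite !coef_deriv epq. Qed.

Lemma eq_upto_mulXK N p q : eq_upto N.+1 ('X * p) ('X * q) -> eq_upto N p q.
Proof. by move=> epq i lt_iN; have := epq i.+1 lt_iN; rewrite !coefXM. Qed.

Lemma mulX_drop_poly1 q : q`_0 = 0 -> 'X * drop_poly 1 q = q.
Proof.
move=> q0; rewrite -[RHS](poly_take_drop 1) mulrC.
suff -> : take_poly 1 q = 0 by rewrite add0r.
by apply/polyP => -[|i]; rewrite coef_take_poly coef0.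
Qed.

Lemma coef_expr_lt q n i : q`_0 = 0 -> (i < n)%N -> (q ^+ n)`_i = 0.
Proof. by move=> q0 lt_in; rewrite -(mulX_drop_poly1 q0) exprMn coefXnM lt_in. Qed.

Lemma comp_poly_widen p q M :
  (size p <= M)%N -> p \Po q = \sum_(i < M) p`_i *: q ^+ i.
Proof.
move=> le_pM; rewrite comp_polyE (sum_ord_narrow (F := fun i => p`_i *: q ^+ i) le_pM) //.
by move=> i /andP [le_pi _]; rewrite nth_default ?scale0r.
Qed.

Lemma eq_upto_comp N p p' q :
  q`_0 = 0 -> eq_upto N p p' -> eq_upto N (p \Po q) (p' \Po q).
Proof.
move=> q0 epp i lt_iN; apply/eqP; rewrite -subr_eq0 -coefB -comp_polyB coef_comp_poly.
apply/eqP/big1 => j _; rewrite coefB.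
case: (ltnP j N) => [lt_jN | le_Nj]; first by rewrite epp // subrr mul0r.
by rewrite coef_expr_lt ?mulr0 //; apply: leq_trans lt_iN le_Nj.
Qed.

Lemma eq_upto_mulI N (F Q W : {poly R}) :
  eq_upto N (Q * F) 1 -> eq_upto N (W * F) 1 -> eq_upto N Q W.
Proof.
move=> QF1 WF1; have := eq_upto_mull Q WF1; have := eq_upto_mull W QF1.
rewrite !mulr1 mulrCA => WQ QW; exact: eq_upto_trans (eq_upto_sym QW) WQ.
Qed.

End TruncatedEquality.


Section PowerSeriesSequences.

Variable R : comNzRingType.
Implicit Types f g : nat -> R.

Lemma eq_ps_pow f g n : f =1 g -> ps_pow f n =1 ps_pow g n.
Proof.
move=> efg; elim: n => [//|n IH] m /=.
by apply: eq_bigr => i _; rewrite efg IH.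
Qed.

Lemma eq_ps_inv f g : f =1 g -> ps_inv f =1 ps_inv g.
Proof.
move=> efg m; rewrite /ps_inv; congr (nth _ _ _).
elim: m => [//|m IH] /=; rewrite IH; congr (rcons _ (- _)).
by apply: eq_bigr => i _; rewrite efg.
Qed.

Lemma size_ps_inv_seq f m : size (ps_inv_seq f m) = m.+1.
Proof. by elim: m => [//|m IH] /=; rewrite size_rcons IH. Qed.

Lemma nth_ps_inv_seq f m i : (i <= m)%N -> nth 0 (ps_inv_seq f m) i = ps_inv f i.
Proof.
elim: m => [|m IH] le_im; first by move: le_im; rewrite leqn0 => /eqP ->.
rewrite /= nth_rcons size_ps_inv_seq; case: ltnP => [|le_mi]; first exact: IH.
have -> : i = m.+1 by apply/eqP; rewrite eqn_leq le_im.
by rewrite eqxx /ps_inv /= nth_rcons size_ps_inv_seq ltnn eqxx.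
Qed.

Lemma ps_invS f m : ps_inv f m.+1 = - \sum_(i < m.+1) f i.+1 * ps_inv f (m - i).
Proof.
rewrite /ps_inv /= nth_rcons size_ps_inv_seq ltnn eqxx big_add1 big_mkord.
by congr (- _); apply: eq_bigr => i _; rewrite nth_ps_inv_seq // subSS leq_subr.
Qed.

Lemma ps_mul_inv f : f 0%N = 1 -> ps_mul f (ps_inv f) =1 @ps_one R.
Proof.
move=> f0 [|m]; first by rewrite /ps_mul big_ord1 f0 mul1r.
by rewrite /ps_mul big_ord_recl f0 mul1r subn0 ps_invS addNr.
Qed.

Definition trunc M f : {poly R} := \poly_(i < M) f i.

Lemma coef_trunc_mul f g M m :
  (m < M)%N -> (trunc M f * trunc M g)`_m = ps_mul f g m.
Proof.
move=> lt_mM; rewrite coefM; apply: eq_bigr => i _.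
by rewrite !coef_poly !(leq_ltn_trans _ lt_mM) ?leq_subr // -ltnS.
Qed.

Lemma trunc_ps_pow f n M : eq_upto M (trunc M (ps_pow f n)) (trunc M f ^+ n).
Proof.
elim: n => [|n IH] i lt_iM; rewrite coef_poly lt_iM /=; first by rewrite coef1.
by rewrite exprS -(coef_trunc_mul _ _ lt_iM) (eq_upto_mull _ IH).
Qed.

Lemma trunc_ps_pow_inv f n M : f 0%N = 1 ->
  eq_upto M (trunc M (ps_pow (ps_inv f) n) * trunc M f ^+ n) 1.
Proof.
move=> f0.
have e := eq_upto_mul (trunc_ps_pow (ps_inv f) n (M:=M)) (eq_upto_refl (trunc M f ^+ n)).
apply: (eq_upto_trans e); rewrite -exprMn -(expr1n _ n); apply: eq_upto_exp => i lt_iM.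
by rewrite mulrC coef_trunc_mul // ps_mul_inv // coef1.
Qed.

End PowerSeriesSequences.

Section BellOnSets.

Variables (R : comPzRingType) (T : finType) (x : nat -> R).
Implicit Types (X S : {set T}) (Q : {set {set T}}).

Definition bell_on X k : R :=
  \sum_(P : {set {set T}} | partition P X && (#|P| == k)) \prod_(B in P) x #|B|.

Lemma partition_add_block X a S Q :
  a \in X -> S \subset X :\ a -> partition Q (X :\ a :\: S) ->
  [/\ partition ((a |: S) |: Q) X, a |: S \notin Q, a \notin S &
      pblock ((a |: S) |: Q) a = a |: S].
Proof.
move=> aX; rewrite subsetD1 => /andP [SX aS] /and3P [/eqP covQ trivQ s0Q].
set B := a |: S.
have BQ : B \notin Q.
  apply/negP => BQ; have : a \in cover Q by apply/bigcupP; exists B; rewrite ?setU11.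
  by rewrite covQ !inE eqxx andbF.
have disjBQ : {in Q, forall C : {set T}, [disjoint B & C]}.
  move=> C CQ; rewrite -setI_eq0; apply/eqP/setP => y; rewrite !inE.
  apply/negP => /andP [yB yC]; have : y \in cover Q by apply/bigcupP; exists C.
  by rewrite covQ !inE; case/orP: yB => [/eqP ->|->]; rewrite ?eqxx ?andbF.
have [trivP _] := trivIsetU1 disjBQ trivQ s0Q.
have partP : partition (B |: Q) X.
  apply/and3P; split => //.
  - rewrite /cover big_setU1 //= -/(cover Q) covQ; apply/eqP/setP => y; rewrite !inE.
    case: (eqVneq y a) => [->|ya] //=; case yS: (y \in S) => //=.
    by rewrite (subsetP SX).
  - rewrite !inE negb_or s0Q andbT; apply/negP => /eqP B0.
    by have := setU11 a S; rewrite -/B -B0 inE.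
by split=> //; apply: def_pblock; rewrite ?setU11.
Qed.

Lemma partition_remove_block X a S Q :
  a \in X -> partition ((a |: S) |: Q) X -> a \notin S -> a |: S \notin Q ->
  S \subset X :\ a /\ partition Q (X :\ a :\: S).
Proof.
move=> aX /and3P [/eqP covP trivP s0P] aS BQ; set B := a |: S in BQ covP trivP s0P *.
have BP : B \in B |: Q by rewrite setU11.
have covPE : cover (B |: Q) = B :|: cover Q by rewrite /cover big_setU1.
split.
  rewrite subsetD1 aS andbT -covP; apply/subsetP => y yS; apply/bigcupP.
  by exists B => //; rewrite !inE yS orbT.
apply/and3P; split; last first.
- by apply: contra s0P; apply: setU1r.
- by apply: trivIsetS trivP; apply/subsetP => C; apply: setU1r.
apply/eqP/setP => y; rewrite setDDl !inE; apply/idP/idP => [yQ|].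
  have yX : y \in X by rewrite -covP covPE inE yQ orbT.
  rewrite yX andbT; apply/negP => yB; case/bigcupP: yQ => C CQ yC.
  have CB : C != B by apply: contraNneq BQ => <-.
  have := trivIsetP trivP C B (setU1r _ CQ) BP CB.
  by move/disjointFr => /(_ y yC); rewrite !inE yB.
by case/andP => yB; rewrite -covP covPE !inE (negbTE yB).
Qed.

Lemma bell_on_rec X a k : a \in X ->
  bell_on X k.+1 =
    \sum_(S : {set T} | S \subset X :\ a) x #|S|.+1 * bell_on (X :\ a :\: S) k.
Proof.
move=> aX; rewrite /bell_on.
pose glue (j : {set T} * {set {set T}}) := (a |: j.1) |: j.2.
pose split_off (P : {set {set T}}) := (pblock P a :\ a, P :\ pblock P a).
rewrite (reindex_onto glue split_off); last first.
  move=> P /andP [/and3P [/eqP covP trivP s0P] _]; rewrite /glue /split_off /=.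
  have aP : a \in cover P by rewrite covP.
  by rewrite setD1K ?mem_pblock // setD1K // pblock_mem.
rewrite (eq_bigl (fun j : {set T} * {set {set T}} => (j.1 \subset X :\ a) &&
           (partition j.2 (X :\ a :\: j.1) && (#|j.2| == k)))); last first.
  move=> [S Q]; rewrite /glue /split_off /=; apply/idP/idP.
    case/andP => /andP [partP cardP] /eqP [].
    have BP : a |: S \in (a |: S) |: Q by rewrite setU11.
    have pbP : pblock ((a |: S) |: Q) a = a |: S.
      by case/and3P: partP => _ trivP _; apply: def_pblock; rewrite ?setU11.
    rewrite pbP => eS eQ.
    have aS : a \notin S by rewrite -eS setD11.
    have BQ : a |: S \notin Q by rewrite -eQ setD11.
    have [SX partQ] := partition_remove_block aX partP aS BQ.
    by move: cardP; rewrite SX partQ cardsU1 BQ add1n eqSS.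
  case/and3P => SX partQ /eqP cardQ.
  have [partP BQ aS pbP] := partition_add_block aX SX partQ.
  by rewrite partP cardsU1 BQ cardQ pbP setU1K // setU1K // !eqxx.
rewrite -(pair_big_dep (fun S : {set T} => S \subset X :\ a)
   (fun (S : {set T}) (Q : {set {set T}}) => partition Q (X :\ a :\: S) && (#|Q| == k))
   (fun S Q => \prod_(B in glue (S, Q)) x #|B|)) /=.
apply: eq_bigr => S SX; rewrite mulr_sumr; apply: eq_bigr => Q /andP [partQ _].
have [_ BQ aS _] := partition_add_block aX SX partQ.
by rewrite big_setU1 //= cardsU1 aS.
Qed.

Lemma bell_on0 X : bell_on X 0 = (X == set0)%:R.
Proof.
rewrite /bell_on (eq_bigl (fun P => (P == set0) && (X == set0))); last first.
  move=> P; apply/idP/idP.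
    case/andP => /and3P [/eqP covP _ _] /eqP /cards0_eq P0.
    by rewrite P0 eqxx -covP P0 /cover big_set0 /=.
  by case/andP => /eqP -> /eqP ->; rewrite cards0 eqxx andbT partition_set0.
case: eqP => _; last by rewrite big1 // => P /andP [].
by rewrite (big_pred1 set0) ?big_set0 // => P; rewrite andbT.
Qed.

Lemma bell_on_set0S k : bell_on set0 k.+1 = 0.
Proof.
rewrite /bell_on big_pred0 // => P.
apply/negP => /andP [/and3P [/eqP covP _ s0P] /eqP cardP].
have /set0Pn [B BP] : P != set0 by rewrite -card_gt0 cardP.
have : B \subset cover P by apply/subsetP => y yB; apply/bigcupP; exists B.
by rewrite covP subset0 => /eqP B0; move: s0P; rewrite -B0 BP.
Qed.

Lemma sum_subsets_card (Y : {set T}) (F : nat -> R) :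
  \sum_(S : {set T} | S \subset Y) F #|S| = \sum_(i < #|Y|.+1) F i *+ 'C(#|Y|, i).
Proof.
transitivity (\sum_(S : {set T} | S \subset Y)
                \sum_(i < #|Y|.+1) (if #|S| == i then F i else 0)).
  apply: eq_bigr => S SY; have ltSY : (#|S| < #|Y|.+1)%N by rewrite ltnS subset_leq_card.
  rewrite (bigD1 (Ordinal ltSY)) //= eqxx big1 ?addr0 // => i.
  by move=> neq_i; case: eqP => // eSi; case/eqP: neq_i; apply: val_inj.
rewrite exchange_big; apply: eq_bigr => i _.
rewrite -big_mkcondr /= sumr_const -cards_draws; congr (_ *+ _).
by apply: eq_card => S; rewrite inE.
Qed.

Lemma bell_on_recE (c : nat -> nat -> R) :
  c 0%N 0%N = 1 -> (forall k, c 0%N k.+1 = 0) -> (forall m, c m.+1 0%N = 0) ->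
  (forall m k, c m.+1 k.+1 = \sum_(i < m.+1) (x i.+1 * c (m - i)%N k) *+ 'C(m, i)) ->
  forall X k, bell_on X k = c #|X| k.
Proof.
move=> c00 c0S cS0 cSS X k.
have [N ltXN] := ubnP #|X|; elim: N X k ltXN => [//|N IH] X k ltXN.
have [->|/set0Pn [a aX]] := eqVneq X set0.
  by rewrite cards0; case: k => [|k]; rewrite ?bell_on0 ?eqxx ?bell_on_set0S.
have cardX : #|X| = #|X :\ a|.+1 by rewrite (cardsD1 a X) aX.
case: k => [|k].
  by rewrite bell_on0 cardX cS0; case: eqP => // X0; move: aX; rewrite X0 inE.
rewrite (bell_on_rec _ aX) cardX cSS.
rewrite -(sum_subsets_card _ (fun i => x i.+1 * c (#|X :\ a| - i)%N k)).
apply: eq_bigr => S SX.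
have cardD : #|X :\ a :\: S| = (#|X :\ a| - #|S|)%N by rewrite cardsD (setIidPr SX).
by rewrite IH cardD // (leq_ltn_trans (leq_subr _ _)) // -ltnS -cardX.
Qed.

End BellOnSets.

Lemma rmorph_bell (R R' : comPzRingType) (f : {rmorphism R -> R'}) j k (x : nat -> R) :
  f (bell j k x) = bell j k (f \o x).
Proof. by rewrite rmorph_sum; apply: eq_bigr => P _; rewrite rmorph_prod. Qed.

Section BellGeneratingFunction.

Variables (K : fieldType) (A : comAlgType K).
Hypothesis charK0 : [pchar K] =i pred0.

Lemma natf_neq0_pchar0 n : (0 < n)%N -> (n%:R : K) != 0.
Proof. by move=> n_gt0; rewrite ((pcharf0P K).1 charK0) -lt0n. Qed.

Lemma fact_neq0 n : (n`!%:R : K) != 0.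
Proof. exact/natf_neq0_pchar0/fact_gt0. Qed.

Lemma fact_divf n : (n.+1`!%:R / n`!%:R : K) = n.+1%:R.
Proof. by rewrite factS natrM mulfK ?fact_neq0. Qed.

Lemma mulrnI_pchar0 n (a b : A) : (0 < n)%N -> a *+ n = b *+ n -> a = b.
Proof.
by move=> n_gt0; rewrite -!scaler_nat => /scalerI; apply; apply: natf_neq0_pchar0.
Qed.

Definition egf (x : nat -> A) M : {poly A} :=
  \poly_(j < M) (if j == 0%N then 0 else (j`!%:R : K)^-1 *: x j).

Lemma egf_coef0 x M : (egf x M)`_0 = 0.
Proof. by rewrite coef_poly; case: M. Qed.

Lemma coef_egf_expr_indep x M M' k m : (m < M)%N -> (m < M')%N ->
  (egf x M ^+ k)`_m = (egf x M' ^+ k)`_m.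
Proof.
move=> lt_mM lt_mM'; suff e : eq_upto m.+1 (egf x M) (egf x M').
  by rewrite (eq_upto_exp k e).
by move=> i lt_im; rewrite !coef_poly (leq_trans lt_im lt_mM) (leq_trans lt_im lt_mM').
Qed.

Definition bell_egf x m k : A :=
  (k`!%:R : K)^-1 *: ((egf x m.+1 ^+ k)`_m *+ m`!).

Lemma bell_egfSS x m k : bell_egf x m.+1 k.+1 =
  \sum_(i < m.+1) (x i.+1 * bell_egf x (m - i) k) *+ 'C(m, i).
Proof.
apply: (scalerI (fact_neq0 k.+1)); rewrite /bell_egf scalerA mulfV ?fact_neq0 // scale1r.
set Y := egf x m.+2; rewrite scaler_sumr.
have derivY : (Y ^+ k.+1)`_m.+1 *+ m.+1 = \sum_(i < m.+1)
    ((i.+1`!%:R : K)^-1 *: x i.+1 * (Y ^+ k)`_(m - i)) *+ (i.+1 * k.+1).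
  rewrite -coef_deriv deriv_exp /= coefMn coefM -sumrMnl; apply: eq_bigr => i _.
  rewrite coef_deriv /Y coef_poly ltnS (leq_trans (ltn_ord i)) //.
  by rewrite mulrnAl -mulrnA mulnC.
rewrite factS mulrnA derivY -sumrMnl; apply: eq_bigr => i _.
rewrite (@coef_egf_expr_indep _ (m - i).+1 m.+2) //; last first.
  by rewrite ltnS (leq_trans (leq_subr _ _)).
rewrite -/Y; move: ((Y ^+ k)`_(m - i)) => y.
rewrite -!scaler_nat -scalerAl -!scalerAr !scalerA; congr (_ *: _).
rewrite -(bin_fact (ltnSE (ltn_ord i))) !factS !natrM.
have := fact_neq0 i; have := fact_neq0 k.
move: (i`!%:R : K) (k`!%:R : K) => fi fk nz_fk nz_fi.
by field; rewrite nz_fi nz_fk nat1r natf_neq0_pchar0.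
Qed.

Lemma bell_on_egf (T : finType) x (X : {set T}) k : bell_on x X k = bell_egf x #|X| k.
Proof.
apply: bell_on_recE => [|k'|m|m k']; last exact: bell_egfSS.
- by rewrite /bell_egf expr0 coef1 invr1 scale1r.
- by rewrite /bell_egf coef_expr_lt ?egf_coef0 // mul0rn scaler0.
- by rewrite /bell_egf expr0 coef1 mul0rn scaler0.
Qed.

Lemma coef_egf_expr x M j k : (j < M)%N ->
  (egf x M ^+ k)`_j = (j`!%:R : K)^-1 *: (k`!%:R *: bell j k x).
Proof.
move=> lt_jM; have -> : bell j k x = bell_egf x j k.
  by rewrite -[j in bell_egf _ j]card_ord -cardsT -bell_on_egf.
rewrite /bell_egf scalerKV ?fact_neq0 // -scaler_nat scalerK ?fact_neq0 //.
exact: coef_egf_expr_indep.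
Qed.

End BellGeneratingFunction.

Section LagrangeInversion.

Variables (K : fieldType) (A : comAlgType K).
Hypothesis charK0 : [pchar K] =i pred0.
Implicit Types (U V G P Q : {poly A}).

(* The residue of [(X V)^-e d(X V)], with [U = 1/V] mod [X^M]: for [e > 1] the
   form is exact, the derivative of [U^(e-1) / (1 - e)], as [U' = - U^2 V']. *)
Lemma coef_residue M U V e : eq_upto M (U * V) 1 -> (0 < e)%N -> (e.-1 < M)%N ->
  (U ^+ e * ('X * V)^`())`_e.-1 = (e == 1%N)%:R.
Proof.
move=> UV1 e_gt0 lt_eM.
rewrite derivM derivX mul1r mulrDr coefD.
have -> : (U ^+ e * V)`_e.-1 = (U ^+ e.-1)`_e.-1.
  rewrite -{1}(prednK e_gt0) exprS [U * _]mulrC -mulrA.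
  by have := eq_upto_mull (U ^+ e.-1) UV1; rewrite mulr1 => ->.
case: e e_gt0 lt_eM => [//|[|f]] _ /= lt_fM.
  by rewrite expr0 coef1 mulrCA coefXM addr0.
rewrite mulrCA coefXM /=.
case: M UV1 lt_fM => [//|M] UV1 lt_fM.
have derivUV : eq_upto M (U^`() * V + U * V^`()) 0.
  by have := eq_upto_deriv UV1; rewrite derivM derivC.
have derivU : eq_upto M U^`() (- (U ^+ 2 * V^`())).
  have UV1' := eq_upto_mull U^`() (eq_upto_le (leqnSn M) UV1).
  have := eq_upto_mull U derivUV; rewrite mulr0 mulrDr => e0 i lt_iM.
  move: (e0 i lt_iM); rewrite coef0 coefD mulrCA (UV1' i lt_iM) mulr1 => /eqP.
  by rewrite addr_eq0 => /eqP ->; rewrite coefN mulrA -expr2.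
have derivUf : eq_upto M (U ^+ f.+1)^`() (- (U ^+ f.+2 * V^`()) *+ f.+1).
  rewrite deriv_exp /= => i lt_iM; rewrite !coefMn; congr (_ *+ _).
  rewrite (eq_upto_mul derivU (eq_upto_refl (U ^+ f)) lt_iM).
  by rewrite mulNr -mulrA [V^`() * _]mulrC mulrA -exprD.
have := derivUf f lt_fM; rewrite coef_deriv coefMn coefN.
by move/(mulrnI_pchar0 charK0 (ltn0Sn f)) => ->; rewrite addNr.
Qed.

Lemma lagrange_inversion N G P Q n :
  G`_0 = 0 -> (0 < n < N)%N ->
  eq_upto N (G * (P \Po G)) 'X -> eq_upto N (Q * P ^+ n) 1 ->
  G`_n *+ n = Q`_n.-1.
Proof.
move=> G0 /andP [n_gt0 lt_nN] GPX QP1.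
case: N lt_nN GPX QP1 => [//|N] lt_nN GPX QP1.
set V := drop_poly 1 G; have GXV : 'X * V = G := mulX_drop_poly1 G0.
set U := P \Po G.
have UV1 : eq_upto N (U * V) 1.
  by apply: eq_upto_mulXK; rewrite mulr1 mulrCA GXV mulrC.
have QGU1 : eq_upto N.+1 ((Q \Po G) * U ^+ n) 1.
  by have := eq_upto_comp G0 QP1; rewrite comp_polyM rmorphXn rmorph1.
have coefGi i : (G ^+ i * U ^+ n * G^`())`_n.-1 = (i == n.-1)%:R.
  rewrite -GXV exprMn -!mulrA coefXnM.
  case: ltnP => [lt_ni|le_in]; first by rewrite gtn_eqF.
  have le_in' : (i <= n)%N by apply: leq_trans le_in (leq_pred n).
  have -> : V ^+ i * (U ^+ n * ('X * V)^`()) =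
            (U * V) ^+ i * (U ^+ (n - i) * ('X * V)^`()).
    by rewrite exprMn -(subnK le_in') exprD subnK //; ring.
  have UVi : eq_upto N ((U * V) ^+ i) 1 by rewrite -(expr1n _ i); apply: eq_upto_exp.
  rewrite (eq_upto_mul UVi (eq_upto_refl _)); last by lia.
  rewrite mul1r (_ : (n.-1 - i = (n - i).-1)%N); last by lia.
  rewrite (coef_residue UV1); [by congr _%:R; apply/eqP/eqP; lia | lia | lia].
have -> : G`_n *+ n = G^`()`_n.-1 by rewrite coef_deriv prednK.
rewrite -[G^`()]mul1r -(eq_upto_mul QGU1 (eq_upto_refl G^`())); last by lia.
rewrite comp_polyE !mulr_suml coef_sum.
under eq_bigr => i _ do rewrite -!scalerAl coefZ coefGi mulr_natr mulrb.
rewrite -big_mkcond big_ord1_eq; case: ltnP => // le_Qn.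
by rewrite nth_default.
Qed.

End LagrangeInversion.

Section NegativeBinomialSeries.

Variable R : comNzRingType.

(* The truncation of (1 + X)^-n. *)
Definition negbin M n : {poly R} := \poly_(k < M) ((-1) ^+ k * 'C(n + k - 1, k)%:R).

Lemma negbinS M n : eq_upto M (negbin M n.+1 * (1 + 'X)) (negbin M n).
Proof.
move=> i lt_iM; rewrite mulrDr mulr1 coefD coefMX !coef_poly lt_iM.
case: i lt_iM => [|k] lt_kM /=; first by rewrite addr0 !expr0 !mul1r !bin0.
rewrite (ltnW lt_kM) !addnS !subSS !subn0 addSn binS natrD exprS mulN1r mulNr.
by rewrite mulrDr opprD addrNK mulNr.
Qed.

Lemma negbin_mul_expr M n : eq_upto M (negbin M n * (1 + 'X) ^+ n) 1.
Proof.
elim: n => [|n IH].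
  move=> i lt_iM; rewrite mulr1 coef_poly lt_iM coef1.
  by case: i lt_iM => [|k] _; rewrite ?expr0 ?mul1r ?bin0 // add0n subn1 bin_small ?mulr0.
rewrite exprS mulrA; apply: eq_upto_trans _ IH.
exact: eq_upto_mul (@negbinS M n) (eq_upto_refl _).
Qed.

Lemma negbin_comp_mul_expr M n (T : {poly R}) : T`_0 = 0 ->
  eq_upto M ((negbin M n \Po T) * (1 + T) ^+ n) 1.
Proof.
move=> T0; have := eq_upto_comp T0 (@negbin_mul_expr M n).
by rewrite comp_polyM rmorphXn !rmorphD !rmorph1 /= comp_polyX.
Qed.

End NegativeBinomialSeries.
Arguments negbin {R} M n.

Section Antipode.

Variables (K : fieldType) (A : comAlgType K).
Hypothesis charK0 : [pchar K] =i pred0.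

Lemma bell11 (x : nat -> A) : bell 1 1 x = x 1%N.
Proof.
have := @coef_egf_expr K A charK0 x 2 1 1 (ltnSn 1).
by rewrite expr1 coef_poly /= !invr1 !scale1r.
Qed.

Lemma coef_egf_mul_comp (x y : nat -> A) M j : (j < M)%N ->
  (egf x M * (trunc M (fun m => (m`!%:R : K)^-1 *: y m.+1) \Po egf x M))`_j =
  (j`!%:R : K)^-1 *: \sum_(1 <= k < j.+1) bell j k x * (k%:R * y k).
Proof.
move=> lt_jM; set h := fun m => _ *: y m.+1.
rewrite (comp_poly_widen _ (size_poly _ _)) mulr_sumr coef_sum.
rewrite big_add1 big_mkord scaler_sumr.
under eq_bigr => i _ do rewrite -scalerAr -exprS coefZ.
pose F i := (trunc M h)`_i * (egf x M ^+ i.+1)`_j.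
rewrite (sum_ord_narrow (F := F) (ltnW lt_jM)).
  apply: eq_bigr => i _; rewrite /F (coef_egf_expr charK0 _ _ lt_jM).
  rewrite coef_poly (ltn_trans (ltn_ord i) lt_jM) -scalerAl -!scalerAr !scalerA mulrC.
  rewrite mulrCA mulr_natl -scaler_nat scalerA [y _ * _]mulrC; congr (_ *: _).
  by rewrite -mulrA fact_divf.
by move=> i /andP [le_ji _]; rewrite /F coef_expr_lt ?egf_coef0 ?mulr0.
Qed.

Lemma coef_negbin_comp_egf (x : nat -> A) M n j : (0 < j < M)%N ->
  j`!%:R * (negbin M n \Po egf x M)`_j =
  \sum_(1 <= k < j.+1) (-1) ^+ k * ((n + k - 1) ^_ k)%:R * bell j k x.
Proof.
case/andP=> j_gt0 lt_jM; rewrite (comp_poly_widen _ (size_poly _ _)) coef_sum.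
under eq_bigr => i _ do rewrite coefZ.
rewrite (@sum_ord_narrow _ M j.+1 (fun i => (negbin M n)`_i * (egf x M ^+ i)`_j) lt_jM);
  last by move=> i /andP [lt_ji _]; rewrite coef_expr_lt ?egf_coef0 ?mulr0.
rewrite big_ord_recl expr0 coef1 gtn_eqF // mulr0 add0r mulr_sumr big_add1 big_mkord /=.
apply: eq_bigr => k _.
rewrite coef_poly (leq_ltn_trans (ltn_ord k) lt_jM) (coef_egf_expr charK0 _ _ lt_jM).
rewrite /bump /= !add1n -bin_ffact natrM -!scalerAr.
rewrite [in LHS]mulr_natl -scaler_nat !scalerA.
by rewrite mulrAC mulVf ?fact_neq0 // mul1r scaler_nat -mulr_natr; ring.
Qed.

Definition egf_shift (t : nat -> A) j : A :=
  if j == 0%N then 1 else (j`!%:R : K)^-1 *: t j.+1.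

Lemma egf_shift_pow_bell (t : nat -> A) n : (2 <= n)%N ->
  egf_coef n.-1 (ps_pow (ps_inv (egf_shift t)) n) =
  \sum_(1 <= k < n) (-1) ^+ k * ((n + k - 1) ^_ k)%:R * bell n.-1 k (fun j => t j.+1).
Proof.
move=> le2n; set M := n.+1; set T := egf (fun j => t j.+1) M.
set Q := trunc M (ps_pow (ps_inv (egf_shift t)) n).
have PT : eq_upto M (trunc M (egf_shift t)) (1 + T).
  move=> i lt_iM; rewrite coefD coef1 !coef_poly lt_iM /egf_shift.
  by case: i {lt_iM} => [|i] /=; rewrite ?addr0 ?add0r.
have QW : eq_upto M Q (negbin M n \Po T).
  apply: (eq_upto_mulI _ (negbin_comp_mul_expr n (egf_coef0 _ _))).
  apply: eq_upto_trans (trunc_ps_pow_inv n (erefl _)).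
  exact/eq_upto_mull/eq_upto_exp/eq_upto_sym.
have lt_nM : (n.-1 < M)%N := leq_ltn_trans (leq_pred n) (ltnSn n).
rewrite /egf_coef (_ : ps_pow _ n n.-1 = Q`_n.-1); last by rewrite coef_poly lt_nM.
have n1_gt0 : (0 < n.-1)%N by rewrite -ltnS prednK // ltnW.
by rewrite QW // coef_negbin_comp_egf ?n1_gt0 ?lt_nM // prednK // ltnW.
Qed.

Lemma egf_shiftE (t : nat -> A) :
  (fun m => let j := m.+1 in
     if j == 1%N then 1 else (j`!%:R : K)^-1 *: (j%:R * t j)) =1 egf_shift t.
Proof.
case=> [//|m] /=; rewrite mulr_natl -scaler_nat scalerA factS natrM invfM.
by rewrite mulrAC mulVf ?mul1r // natf_neq0_pchar0.
Qed.

Section AntipodeIdentity.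

Variables (t : nat -> A) (S : {rmorphism A -> A}).
Hypothesis t1 : t 1%N = 1.
Hypothesis hS : forall n : nat, (2 <= n)%N ->
  (n%:R : K)^-1 *:
    \sum_(1 <= k < n.+1) S (bell n k (fun j => j%:R * t j)) * (k%:R * t k) = 0.

Let s := S \o (fun j => j%:R * t j).

Lemma egf_antipode_mul_comp M :
  eq_upto M (egf s M * (trunc M (fun m => (m`!%:R : K)^-1 *: t m.+1) \Po egf s M)) 'X.
Proof.
move=> j lt_jM; rewrite coef_egf_mul_comp // coefX.
case: j lt_jM => [|[|j]] lt_jM /=.
- by rewrite big_geq ?scaler0.
- by rewrite big_nat1 bell11 /s /= t1 mul1r rmorph1 mulr1 -[1`!]/(1%N) invr1 scale1r.
have /eqP := hS (isT : (2 <= j.+2)%N).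
rewrite scaler_eq0 invr_eq0 (negbTE (natf_neq0_pchar0 charK0 _)) //= => /eqP sum0.
rewrite (eq_bigr (fun k => S (bell j.+2 k (fun i => i%:R * t i)) * (k%:R * t k))).
  by rewrite sum0 scaler0.
by move=> k _; rewrite rmorph_bell.
Qed.

Lemma antipode_lagrange n : (2 <= n)%N ->
  n%:R * S (t n) = egf_coef n.-1 (ps_pow (ps_inv (egf_shift t)) n).
Proof.
case: n => [//|m] le2m; set M := m.+2.
set P := trunc M (fun m => (m`!%:R : K)^-1 *: t m.+1).
have PE : trunc M (egf_shift t) = P.
  by apply/polyP => i; rewrite !coef_poly; case: i => [|i] //=; rewrite t1 invr1 scale1r.
have QP1 := trunc_ps_pow_inv m.+1 (M:=M) (erefl (egf_shift t 0%N)); rewrite PE in QP1.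
have := lagrange_inversion charK0 (egf_coef0 s M) (ltnSn m.+1 : (0 < m.+1 < M)%N)
  (egf_antipode_mul_comp (M:=M)) QP1.
rewrite !coef_poly !ltnS leqnn ltnW //= /egf_coef => <-.
rewrite /s /= rmorphM rmorph_nat [RHS]mulr_natl -mulrnA -factS.
by rewrite -[RHS]scaler_nat scalerA mulfV ?fact_neq0 // scale1r.
Qed.

End AntipodeIdentity.

End Antipode.

Unset Implicit Arguments.

Theorem mainTheorem6
  (K : fieldType) (charK0 : [pchar K] =i pred0)
  (A : comAlgType K) (t : nat -> A) (t1 : t 1%N = 1)
  (S : {rmorphism A -> A})
  (hS : forall n : nat, (2 <= n)%N ->
     (n%:R : K)^-1 *:
       \sum_(1 <= k < n.+1)
          S (bell n k (fun j => j%:R * t j)) * (k%:R * t k) = 0) :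
  forall n : nat, (2 <= n)%N ->
    [/\ n%:R * S (t n) =
          \sum_(1 <= k < n)
             (-1) ^+ k * ((n + k - 1) ^_ k)%:R * bell n.-1 k (fun j => t j.+1),
        n%:R * S (t n) =
          egf_coef n.-1
            (ps_pow (ps_inv (fun j => if j == 0%N then 1
                                      else ((j`!)%:R : K)^-1 *: t j.+1)) n)
      & n%:R * S (t n) =
          egf_coef n.-1
            (ps_pow (ps_inv (fun m =>
               let j := m.+1 in
               if j == 1%N then 1
               else (((j`!)%:R : K)^-1 *: (j%:R * t j)))) n)].
Proof.
move=> n le2n; have lagrangeE := antipode_lagrange charK0 t1 hS le2n.
split; [by rewrite lagrangeE egf_shift_pow_bell | exact: lagrangeE |].
by rewrite lagrangeE /egf_coef (eq_ps_pow n (eq_ps_inv (egf_shiftE charK0 t))).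
Qed.
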